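(* Let $\Phi=\{\varphi_j\}_{j=1}^n\subset\mathbb{C}^d$ be a doubly transitive (i.e. doubly covariant) equiangular tight frame with $n>d$. Then for all pairwise distinct $j,k,\ell\in\{1,\dots,n\}$ there exists a $2n$-th root of unity $\zeta_{j,k,\ell}$ such that \[\langle\varphi_j,\varphi_k\rangle\langle\varphi_k,\varphi_\ell\rangle\langle\varphi_\ell,\varphi_j\rangle=\zeta_{j,k,\ell}\left(\frac{n-d}{d(n-1)}\right)^{3/2}.\]
   Context: A set $\Phi=\{\varphi_j\}_{j=1}^n\subset\mathbb{C}^d$ is an equiangular tight frame (ETF) if (1) for all $x\in\mathbb{C}^d$, $x=\frac{d}{n}\sum_{j=1}^n\langle x,\varphi_j\rangle\varphi_j$; (2) $\|\varphi_j\|=1$ for all $j$; (3) there is $\alpha\ge 0$ with $|\langle\varphi_j,\varphi_k\rangle|=\alpha$ for all $j\neq k$. Let $G$ be the group of unitary operators $U$ on $\mathbb{C}^d$ such that there is a permutation $\sigma$ of $\{1,\dots,n\}$ with $U\varphi_j\varphi_j^*U^*=\varphi_{\sigma(j)}\varphi_{\sigma(j)}^*$ for all $j$; the symmetry group of $\Phi$ is $G/S^1$, which acts on $\{1,\dots,n\}$ via these permutations. $\Phi$ is doubly transitive (doubly covariant) if this action is $2$-transitive, i.e. maps every ordered pair of distinct indices to every ordered pair of distinct indices. *)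

From HB Require Import structures.
From mathcomp Require Import all_boot all_order all_algebra all_fingroup.
From mathcomp Require Import complex.
From mathcomp Require Import reals.
Set Implicit Arguments. Unset Strict Implicit. Unset Printing Implicit Defensive.
Import Order.TTheory GRing.Theory Num.Theory.
Local Open Scope ring_scope.

Section ETF.
Variable R : realType.
Local Notation C := R[i].

Definition adjmx m p (A : 'M[C]_(m, p)) : 'M[C]_(p, m) := (map_mx Num.conj A)^T.

(* inner product on C^d (column vectors), linear in the first argument:
   <x, y> = sum_i x_i * conj(y_i) *)
Definition inner d (x y : 'cV[C]_d) : C := \sum_(i < d) x i 0 * (y i 0)^*.

Definition proj1 d (v : 'cV[C]_d) : 'M[C]_d := v *m adjmx v.

Definition unitary d (U : 'M[C]_d) : Prop := adjmx U *m U = 1%:M.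

Definition is_ETF d n (phi : 'I_n -> 'cV[C]_d) : Prop :=
  [/\ (forall x : 'cV[C]_d,
         x = ((d%:R / n%:R) : C) *: \sum_(j < n) (inner x (phi j) *: phi j)),
      (forall j, inner (phi j) (phi j) = 1) &
      (exists alpha : R, 0 <= alpha /\
         forall j k, j != k -> `|inner (phi j) (phi k)| = (alpha%:C)%C)].

Definition sym_with d n (phi : 'I_n -> 'cV[C]_d) (U : 'M[C]_d) (sigma : 'S_n) :=
  unitary U /\
  forall j, U *m proj1 (phi j) *m adjmx U = proj1 (phi (sigma j)).

Definition doubly_transitive d n (phi : 'I_n -> 'cV[C]_d) : Prop :=
  forall j1 k1 j2 k2 : 'I_n, j1 != k1 -> j2 != k2 ->
    exists U : 'M[C]_d, exists sigma : 'S_n,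
      sym_with phi U sigma /\ sigma j1 = j2 /\ sigma k1 = k2.

End ETF.

(** The triple product T(j,k,l) = <phi_j,phi_k><phi_k,phi_l><phi_l,phi_j> is the
    scalar by which P_j P_l P_k P_j multiplies the projection P_j = phi_j phi_j^*,
    so it is invariant under every symmetry of the frame.  By double transitivity
    the edge product Q(x,y) = prod_(m <> x,y) T(x,y,m) then takes one value q on all
    ordered pairs, and q is real because Q(y,x) is the conjugate of Q(x,y).
    Equiangularity gives |T| = alpha^3 and the cocycle identity
    T(j,k,l) T(j,l,m) = T(j,k,m) T(k,l,m), from which T(j,k,l)^n = q alpha^6.  Hence
    zeta = T(j,k,l) / alpha^3 is unimodular with a real n-th power, so
    zeta^(2n) = 1, while tightness gives alpha^2 = (n-d)/(d(n-1)). *)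
From HB Require Import structures.
From mathcomp Require Import all_boot all_order all_algebra all_fingroup.
From mathcomp Require Import complex.
From mathcomp Require Import reals.
From mathcomp Require Import ring.
Set Implicit Arguments. Unset Strict Implicit. Unset Printing Implicit Defensive.
Import Order.TTheory GRing.Theory Num.Theory.
Local Open Scope ring_scope.

Lemma expr2n_eq1_real (C : numClosedFieldType) (z : C) (n : nat) :
  `|z| = 1 -> (z ^+ n)^* = z ^+ n -> z ^+ (2 * n) = 1.
Proof.
move=> z1 zn_real.
by rewrite mulnC exprM expr2 -{2}zn_real -normCK normrX z1 !expr1n.
Qed.

Section InnerProduct.
Variables (R : realType) (d : nat).
Implicit Types (x y u v w z : 'cV[R[i]]_d) (a b : R[i]).

Lemma adjmx_mul x y : adjmx x *m y = (inner y x)%:M.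
Proof.
apply/matrixP => p q; rewrite !ord1 !mxE eqxx mulr1n /inner.
by apply: eq_bigr => i _; rewrite !mxE mulrC.
Qed.

Lemma innerC x y : inner y x = (inner x y)^*.
Proof.
rewrite /inner rmorph_sum; apply: eq_bigr => i _.
by rewrite rmorphM /= conjCK mulrC.
Qed.

Lemma innerZl a x y : inner (a *: x) y = a * inner x y.
Proof.
rewrite /inner big_distrr; apply: eq_bigr => i _.
by rewrite mxE /= mulrA.
Qed.

Lemma inner_suml n (c : 'I_n -> R[i]) (v : 'I_n -> 'cV[R[i]]_d) y :
  inner (\sum_(j < n) c j *: v j) y = \sum_(j < n) c j * inner (v j) y.
Proof.
rewrite /inner; under eq_bigr do rewrite summxE big_distrl /=.
rewrite exchange_big /=; apply: eq_bigr => j _.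
rewrite big_distrr /=; apply: eq_bigr => i _.
by rewrite mxE mulrA.
Qed.

Lemma inner_gt0_dim x : inner x x = 1 -> (0 < d)%N.
Proof.
by case: d x => [|d'] x //; rewrite /inner big_ord0 => /eqP; rewrite eq_sym oner_eq0.
Qed.

Lemma mulmx_outer u v w z :
  (u *m adjmx v) *m (w *m adjmx z) = inner w v *: (u *m adjmx z).
Proof. by rewrite mulmxA -(mulmxA u) adjmx_mul mul_mx_scalar scalemxAl. Qed.

Lemma proj1_triple u v w :
  proj1 u *m proj1 w *m proj1 v *m proj1 u =
  (inner u v * inner v w * inner w u) *: proj1 u.
Proof.
rewrite /proj1 mulmx_outer -scalemxAl mulmx_outer scalerA.
by rewrite -scalemxAl mulmx_outer scalerA; congr (_ *: _); ring.
Qed.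

Lemma scale_proj1_inj u a b :
  inner u u = 1 -> a *: proj1 u = b *: proj1 u -> a = b.
Proof.
move=> u1 eq_ab.
have := congr1 (fun M => adjmx u *m M *m u) eq_ab.
rewrite /= /proj1 -!scalemxAr -!scalemxAl !mulmxA adjmx_mul -mulmxA adjmx_mul u1.
by rewrite mul1mx => /matrixP /(_ 0 0); rewrite !mxE eqxx mulr1n !mulr1.
Qed.

Lemma unitary_conj_mul (U A B : 'M[R[i]]_d) :
  unitary U -> U *m (A *m B) *m adjmx U = (U *m A *m adjmx U) *m (U *m B *m adjmx U).
Proof. by move=> UU; rewrite !mulmxA -(mulmxA _ (adjmx U) U) UU mulmx1. Qed.

End InnerProduct.

Section Frame.
Variables (R : realType) (d n : nat) (phi : 'I_n -> 'cV[R[i]]_d).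
Implicit Types (j k l m x y z : 'I_n).

Definition triple_prod x y z :=
  inner (phi x) (phi y) * inner (phi y) (phi z) * inner (phi z) (phi x).

Local Notation T := triple_prod.

Lemma triple_prodC x y z : T x y z = T y z x.
Proof. by rewrite /triple_prod; ring. Qed.

Lemma conj_triple_prod x y z : (T x y z)^* = T y x z.
Proof. by rewrite /triple_prod !rmorphM /= -!innerC; ring. Qed.

Lemma triple_prod_sym_with (U : 'M[R[i]]_d) (s : 'S_n) :
  (forall j, inner (phi j) (phi j) = 1) -> sym_with phi U s ->
  forall x y z, T (s x) (s y) (s z) = T x y z.
Proof.
move=> phi1 [UU Uphi] x y z.
apply: (@scale_proj1_inj _ _ (phi (s x))); first exact: phi1.
rewrite -proj1_triple -!Uphi -!unitary_conj_mul // proj1_triple.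
by rewrite -scalemxAr -scalemxAl.
Qed.

Definition edge_prod x y := \prod_(m | (m != x) && (m != y)) T x y m.

Local Notation Q := edge_prod.

Lemma conj_edge_prod x y : (Q x y)^* = Q y x.
Proof.
rewrite /edge_prod rmorph_prod; apply: eq_big => m; first by rewrite andbC.
by move=> _; apply: conj_triple_prod.
Qed.

Lemma edge_prod_doubly_transitive :
  (forall j, inner (phi j) (phi j) = 1) -> doubly_transitive phi ->
  forall x y x' y', x != y -> x' != y' -> Q x' y' = Q x y.
Proof.
move=> phi1 dt x y x' y' xy xy'; have [U [s [Us [<- <-]]]] := dt x y x' y' xy xy'.
rewrite /edge_prod (reindex_inj (@perm_inj _ s)) /=.
apply: eq_big => m; first by rewrite !(inj_eq (@perm_inj _ s)).
by move=> _; apply: triple_prod_sym_with phi1 Us _ _ _.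
Qed.

Lemma edge_prod_split x y z : z != x -> z != y ->
  Q x y = T x y z * \prod_(m | m \notin [:: x; y; z]) T x y m.
Proof.
move=> zx zy; rewrite /edge_prod (bigD1 z) /=; last by rewrite zx zy.
by congr (_ * _); apply: eq_bigl => m; rewrite !inE !negb_or andbA.
Qed.

Section Equiangular.
Variable alpha : R.
Local Notation a := (alpha%:C)%C.
Hypothesis equiangular : forall j k, j != k -> `|inner (phi j) (phi k)| = a.

Lemma inner_mul_swap x y :
  x != y -> inner (phi x) (phi y) * inner (phi y) (phi x) = a ^+ 2.
Proof. by move=> xy; rewrite [inner (phi y) _]innerC -normCK equiangular. Qed.

Lemma norm_triple_prod x y z :
  x != y -> y != z -> z != x -> `|T x y z| = a ^+ 3.
Proof. by move=> xy yz zx; rewrite !normrM !equiangular // -expr2 -exprSr. Qed.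

Lemma triple_prod_cocycle j k l m : l != j -> m != k ->
  T j k l * T j l m = T j k m * T k l m.
Proof.
move=> lj mk; rewrite /triple_prod.
transitivity (inner (phi j) (phi k) * inner (phi k) (phi l) *
  inner (phi l) (phi m) * inner (phi m) (phi j) *
  (inner (phi l) (phi j) * inner (phi j) (phi l))); first by ring.
by rewrite inner_mul_swap // -(inner_mul_swap mk); ring.
Qed.

Lemma welch_bound :
  (forall v : 'cV[R[i]]_d,
     v = ((d%:R / n%:R) : R[i]) *: \sum_(j < n) (inner v (phi j) *: phi j)) ->
  (forall j, inner (phi j) (phi j) = 1) -> (d < n)%N ->
  alpha ^+ 2 = (n - d)%:R / (d * (n - 1))%:R.
Proof.
move=> tight phi1 dn; pose k := Ordinal (leq_ltn_trans (leq0n d) dn).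
have d_gt0 := inner_gt0_dim (phi1 k).
have := congr1 (fun v => inner v (phi k)) (tight (phi k)).
rewrite /= phi1 innerZl inner_suml (bigD1 k) //= phi1 mulr1.
rewrite (eq_bigr (fun _ => a ^+ 2)); last first.
  by move=> j jk; apply: inner_mul_swap; rewrite eq_sym.
rewrite sumr_const cardC1 card_ord -subn1 => frame_k.
apply: complexI.
rewrite rmorphXn fmorph_div /= !rmorph_nat natrB ?(ltnW dn) // natrM -mulr_natr.
have n1_neq0 : ((n - 1)%:R : R[i]) != 0.
  by rewrite pnatr_eq0 subn_eq0 -ltnNge (leq_ltn_trans d_gt0 dn).
have d_neq0 : (d%:R : R[i]) != 0 by rewrite pnatr_eq0 -lt0n.
have n_neq0 : (n%:R : R[i]) != 0 by rewrite pnatr_eq0 -lt0n (ltn_trans d_gt0 dn).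
have := congr1 ( *%R^~ n%:R) frame_k; rewrite /= mul1r mulrAC divfK // -mulr_natr.
by move->; field; rewrite n1_neq0 d_neq0.
Qed.

Hypothesis alpha_neq0 : alpha != 0.
Hypothesis edge_prod_const :
  forall x y x' y', x != y -> x' != y' -> Q x' y' = Q x y.

Lemma edge_prod_real x y : x != y -> (Q x y)^* = Q x y.
Proof. by move=> xy; rewrite conj_edge_prod; apply: edge_prod_const; rewrite // eq_sym. Qed.

Lemma edge_prod_neq0 x y : x != y -> Q x y != 0.
Proof.
move=> xy; apply/prodf_neq0 => m /andP [mx my].
rewrite -normr_eq0 norm_triple_prod 1?[_ == m]eq_sym //.
by rewrite expf_eq0 (fmorph_eq0 (real_complex R)) (negbTE alpha_neq0) andbF.
Qed.

Lemma triple_prod_expn j k l : j != k -> k != l -> l != j ->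
  T j k l ^+ n = Q j k * a ^+ 6.
Proof.
move=> jk kl lj.
set P := [predC [:: j; k; l]].
have P_perm x y z : perm_eq [:: x; y; z] [:: j; k; l] ->
    \prod_(m | m \notin [:: x; y; z]) T x y m = \prod_(m in P) T x y m.
  by move=> /perm_mem eq_xyz; apply: eq_bigl => m; rewrite eq_xyz.
pose A := \prod_(m in P) T j l m.
pose B := \prod_(m in P) T j k m.
pose C := \prod_(m in P) T k l m.
(* q := Q j k = Q k l = Q j l, each split at its third index *)
have qB : Q j k = T j k l * B.
  by rewrite (edge_prod_split lj) 1?eq_sym // P_perm.
have qC : Q j k = T j k l * C.
  rewrite (edge_prod_const kl jk) (edge_prod_split jk) 1?eq_sym //.
  by rewrite -triple_prodC P_perm // (perm_rot 1 [:: j; k; l]).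
have qA : Q j k = T j l k * A.
  have jl : j != l by rewrite eq_sym.
  rewrite (edge_prod_const jl jk) (edge_prod_split _ kl) 1?eq_sym // P_perm //.
  by rewrite perm_cons (perm_rot 1 [:: k; l]).
have BC : T j k l ^+ #|P| * A = B * C.
  rewrite -prodr_const -!big_split /=; apply: eq_bigr => m.
  by rewrite /P !inE !negb_or => /and3P [_ mk _]; exact: (triple_prod_cocycle lj mk).
have TT : T j l k * T j k l = a ^+ 6.
  have -> : T j l k = (T j k l)^* by rewrite conj_triple_prod [RHS]triple_prodC.
  by rewrite mulrC -normCK norm_triple_prod // -exprM.
have card_P : (#|P| + 3 = n)%N.
  have <- : #|[:: j; k; l]| = 3%N.
    by apply/card_uniqP; rewrite /= !inE !negb_or jk kl eq_sym lj.
  by rewrite addnC cardC card_ord.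
have qq : Q j k * Q j k = T j k l ^+ 2 * (B * C) by rewrite {1}qB qC; ring.
apply: (mulfI (edge_prod_neq0 jk)).
transitivity (T j k l ^+ (#|P| + 2) * (T j l k * T j k l * A)).
  by rewrite -[X in _ ^+ X]card_P qA !exprD; ring.
by rewrite TT [RHS]mulrA qq -BC exprD; ring.
Qed.

End Equiangular.
End Frame.

Theorem mainTheorem2 (R : realType) (d n : nat) (phi : 'I_n -> 'cV[R[i]]_d) :
  is_ETF phi -> doubly_transitive phi -> (d < n)%N ->
  forall j k l : 'I_n, j != k -> k != l -> l != j ->
  exists zeta : R[i], zeta ^+ (2 * n) = 1 /\
    inner (phi j) (phi k) * inner (phi k) (phi l) * inner (phi l) (phi j)
    = zeta * (let c : R := (n - d)%:R / (d * (n - 1))%:R in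
              (c * Num.sqrt c)%:C)%C.
Proof.
move=> [tight phi1 [alpha [alpha_ge0 equi]]] dt dn j k l jk kl lj.
have alpha2 := welch_bound equi tight phi1 dn.
have d_gt0 := inner_gt0_dim (phi1 j).
have c_gt0 : 0 < (n - d)%:R / (d * (n - 1))%:R :> R.
  by rewrite divr_gt0 // ltr0n ?subn_gt0 // muln_gt0 d_gt0 subn_gt0 (leq_ltn_trans d_gt0 dn).
have alpha_neq0 : alpha != 0.
  by move: c_gt0; rewrite -alpha2; apply: contraTneq => ->; rewrite expr0n ltxx.
have Q_const := edge_prod_doubly_transitive phi1 dt.
set a := (alpha%:C)%C in equi *.
have a_real : a^* = a by rewrite -(equi j k jk) conj_normC.
have a_norm : `|a| = a by rewrite -(equi j k jk) normr_id.
have a_neq0 : a != 0 by rewrite (fmorph_eq0 (real_complex R)).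
exists (triple_prod phi j k l / a ^+ 3); split.
  apply: expr2n_eq1_real.
    by rewrite normf_div normrX a_norm (norm_triple_prod equi) // divff // expf_neq0.
  rewrite exprMn exprVn (triple_prod_expn equi alpha_neq0 Q_const) //.
  by rewrite fmorph_div rmorphM /= !rmorphXn /= a_real (edge_prod_real Q_const jk).
rewrite /= -alpha2 sqrtr_sqr ger0_norm // -exprSr rmorphXn /= -/a.
by rewrite divfK // expf_neq0.
Qed.
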